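(* Let $G$ be an $\alpha$-separable graph with $m$ edges and let $\mathcal{T}$ be a separator tree of $G$ of height $\eta=O(\log m)$ in which, for every non-leaf node $H$, the children of $H$ and the separator $S(H)$ come from a partition as in the definition of $\alpha$-separability (so $|S(H)|\le c\lceil|E(H)|^{\alpha}\rceil$). Let $\mathcal{H}$ be a set of $K$ nodes of $\mathcal{T}$. Then \[\sum_{H\in\mathcal{P}_{\mathcal{T}}(\mathcal{H})}\big(|\partial H|+|S(H)|\big)\le\widetilde{O}(K^{1-\alpha}m^{\alpha}).\]
   Context: A graph $G=(V,E)$ is $\alpha$-separable if there are constants $c>0$, $b\in(0,1)$ such that every nonempty subgraph $H$ of $G$ with $|E(H)|\ge2$ can be partitioned into $H_1,H_2$ with $E(H_1)\cup E(H_2)=E(H)$, $E(H_1)\cap E(H_2)=\emptyset$, $|V(H_1)\cap V(H_2)|\le c\lceil|E(H)|^{\alpha}\rceil$, and $|E(H_i)|\le b|E(H)|$ for $i=1,2$; $S(H)=V(H_1)\cap V(H_2)$. Separator tree: a rooted binary tree $\mathcal{T}$ whose nodes are regions (edge-induced subgraphs) $H$ of $G$, each storing vertex sets $\partial H$, $S(H)$, $F_H$, defined top-down: the root is $G$ with $\partial G=\emptyset$, $F_G=S(G)$; a non-leaf node $H$ has two children $D_1,D_2$ whose edge sets partition $E(H)$, with $V(D_1)\cap V(D_2)=S(H)$, $\partial D_j=(\partial H\cup S(H))\cap V(D_j)$, and $F_H=S(H)\setminus\partial H$; a node with constantly many edges is a leaf with $S(H)=\emptyset$ and $F_H=V(H)\setminus\partial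 H$. For a set $\mathcal{H}$ of nodes, $\mathcal{P}_{\mathcal{T}}(\mathcal{H})$ is the set of all nodes lying on a tree path from some $H\in\mathcal{H}$ to the root (including $H$ and the root). $\widetilde{O}$ hides polylogarithmic factors in $m$. *)

From HB Require Import structures.
From mathcomp Require Import all_boot all_order all_algebra.
From mathcomp Require Import reals.
From mathcomp Require Import exp.
Set Implicit Arguments. Unset Strict Implicit. Unset Printing Implicit Defensive.
Import Order.TTheory GRing.Theory Num.Theory.
Local Open Scope ring_scope.

Section Defs.
Variable V : finType.

(* A (finite simple) graph is given by its edge set; an edge is a 2-element
   vertex set.  Regions / edge-induced subgraphs are subsets of edges. *)
Definition simple_graph (G : {set {set V}}) : Prop :=
  forall e, e \in G -> #|e| = 2%N.

Definition verts (F : {set {set V}}) : {set V} := \bigcup_(e in F) e.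

Variable R : realType.

Definition sepbound (alpha c : R) (n : nat) : R :=
  c * (Num.ceil ((n%:R : R) `^ alpha))%:~R.

Definition separable (alpha c b : R) (G : {set {set V}}) : Prop :=
  forall F : {set {set V}}, F \subset G -> (2 <= #|F|)%N ->
    exists F1 F2 : {set {set V}},
      [/\ F1 :&: F2 = set0, F1 :|: F2 = F,
          (#|verts F1 :&: verts F2|%:R <= sepbound alpha c #|F|),
          (#|F1|%:R <= b * #|F|%:R) & (#|F2|%:R <= b * #|F|%:R)].

(* Separator tree: each node stores its region (edge set); non-leaf nodes
   also store the separator S(H).  Boundaries are computed top-down. *)
Inductive stree : Type :=
| SLeaf of {set {set V}}
| SNode of {set {set V}} & {set V} & stree & stree.

Definition region (t : stree) : {set {set V}} :=
  match t with SLeaf F => F | SNode F _ _ _ => F end.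

Definition sepof (t : stree) : {set V} :=
  match t with SLeaf _ => set0 | SNode _ Sp _ _ => Sp end.

Fixpoint height (t : stree) : nat :=
  match t with SLeaf _ => 0%N | SNode _ _ t1 t2 => (maxn (height t1) (height t2)).+1 end.

Fixpoint wf_tree (alpha c b : R) (L : nat) (t : stree) : Prop :=
  match t with
  | SLeaf F => (#|F| <= L)%N
  | SNode F Sp t1 t2 =>
      [/\ (2 <= #|F|)%N,
          region t1 :&: region t2 = set0,
          region t1 :|: region t2 = F,
          verts (region t1) :&: verts (region t2) = Sp &
          #|Sp|%:R <= sepbound alpha c #|F|] /\
      [/\ #|region t1|%:R <= b * #|F|%:R,
          #|region t2|%:R <= b * #|F|%:R,
          wf_tree alpha c b L t1 & wf_tree alpha c b L t2]
  end.

Definition sep_tree (alpha c b : R) (L : nat) (G : {set {set V}}) (t : stree) : Prop :=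
  region t = G /\ wf_tree alpha c b L t.

(* Nodes are addressed by paths from the root: false = first child,
   true = second child. *)
Fixpoint subtree (t : stree) (p : seq bool) : option stree :=
  match p, t with
  | [::], _ => Some t
  | j :: p', SNode _ _ t1 t2 => subtree (if j then t2 else t1) p'
  | _ :: _, SLeaf _ => None
  end.

Definition is_node (t : stree) (p : seq bool) : bool :=
  if subtree t p is Some _ then true else false.

Fixpoint bnd_from (t : stree) (bd : {set V}) (p : seq bool) : {set V} :=
  match p, t with
  | [::], _ => bd
  | j :: p', SNode _ Sp t1 t2 =>
      let t' := if j then t2 else t1 in
      bnd_from t' ((bd :|: Sp) :&: verts (region t')) p'
  | _ :: _, SLeaf _ => set0
  end.

Definition bnd (t : stree) (p : seq bool) : {set V} := bnd_from t set0 p.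

Definition sep_at (t : stree) (p : seq bool) : {set V} :=
  match subtree t p with Some t' => sepof t' | None => set0 end.

Definition prefixes (p : seq bool) : seq (seq bool) :=
  [seq take i p | i <- iota 0 (size p).+1].

Definition path_closure (Hs : seq (seq bool)) : seq (seq bool) :=
  undup (flatten [seq prefixes p | p <- Hs]).

End Defs.

From mathcomp Require Import all_boot all_order all_algebra.
From mathcomp Require Import reals exp.
From mathcomp Require Import zify ring lra.
Import Order.TTheory GRing.Theory Num.Theory.
Local Open Scope ring_scope.
Set Implicit Arguments. Unset Strict Implicit. Unset Printing Implicit Defensive.

(* Group the nodes of P_T(H) by depth.  The regions at one depth are
   edge-disjoint, so their sizes add up to at most m, and there are at most K
   of them (each is a prefix of a path in H); by concavity of x |-> x^alpha
   their separators have total size O(K^(1-alpha) m^alpha).  Since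
   |dD_1| + |dD_2| <= |dH| + 2|S(H)|, the boundaries at depth i add up to at
   most twice the separators strictly above depth i.  Summing over the
   O(log m) depths gives O(K^(1-alpha) m^alpha log^2 m). *)

Definition child_paths (j : bool) (P : seq (seq bool)) : seq (seq bool) :=
  pmap (fun p => if p is j' :: q then (if j' == j then Some q else None) else None) P.

Lemma mem_child_paths j P q : (q \in child_paths j P) = (j :: q \in P).
Proof.
elim: P => [|p P IH] //=; case: p => [|j' q'] /=; first by rewrite in_cons IH.
case: (eqVneq j' j) => [->|ne] /=; first by rewrite !in_cons eqseq_cons eqxx IH.
by rewrite in_cons eqseq_cons eq_sym (negbTE ne) IH.
Qed.

Lemma uniq_child_paths j P : uniq P -> uniq (child_paths j P).
Proof.
elim: P => [|p P IH] //= /andP[pP /IH uPj]; case: p pP => [|j' q] pP /=; first exact: uPj.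
case: (eqVneq j' j) pP => [-> pP|_ _] /=; last exact: uPj.
by rewrite -/(child_paths j P) mem_child_paths pP.
Qed.

Definition level_sum (f : seq bool -> nat) (P : seq (seq bool)) (i : nat) : nat :=
  \sum_(p <- P | size p == i) f p.

Lemma level_sum0 f P : uniq P -> (level_sum f P 0 <= f [::])%N.
Proof.
rewrite /level_sum; elim: P => [|p P IH] /=; first by rewrite big_nil.
case/andP=> pP /IH {}IH; rewrite big_cons; case: p pP => [|j q] pP //=.
by rewrite big1_seq ?addn0 // => p /andP[/nilP -> nilP]; rewrite nilP in pP.
Qed.

Lemma level_sumS f P i :
  level_sum f P i.+1 = (level_sum (fun q => f (false :: q)) (child_paths false P) i
                        + level_sum (fun q => f (true :: q)) (child_paths true P) i)%N.
Proof.
rewrite /level_sum; elim: P => [|p P IH]; first by rewrite !big_nil.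
by rewrite !big_cons IH; case: p => [|[] q] //=; rewrite big_cons eqSS; case: ifP; lia.
Qed.

Lemma level_sumD f g P i :
  level_sum (fun p => f p + g p)%N P i = (level_sum f P i + level_sum g P i)%N.
Proof. exact: big_split. Qed.

Lemma sum_by_level f P N : (forall p, p \in P -> size p < N)%N ->
  (\sum_(p <- P) f p = \sum_(i < N) level_sum f P i)%N.
Proof.
move=> szP; rewrite /level_sum; under [RHS]eq_bigr do rewrite big_mkcond.
rewrite -exchange_big /= !big_seq; apply: eq_bigr => p /szP ltpN.
by rewrite -big_mkcond (big_pred1 (Ordinal ltpN)) // => i; rewrite eq_sym.
Qed.

Definition prefix_closed (P : seq (seq bool)) := forall p i, p \in P -> take i p \in P.

Lemma prefix_closed_child_paths j P : prefix_closed P -> prefix_closed (child_paths j P).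
Proof. by move=> closedP p i; rewrite !mem_child_paths => /(closedP _ i.+1). Qed.

Lemma prefix_closed_nil P : prefix_closed P -> P != [::] -> [::] \in P.
Proof. by case: P => [|p P] // closedP _; rewrite -(take0 p) closedP ?mem_head. Qed.

Lemma prefixesP p q : reflect (exists i, p = take i q) (p \in prefixes q).
Proof.
apply: (iffP mapP) => [[i _ ->]|[i ->]]; first by exists i.
exists (minn i (size q)); first by rewrite mem_iota ltnS geq_minr.
by rewrite take_min take_size.
Qed.

Lemma path_closureP p Hs :
  reflect (exists2 q, q \in Hs & exists i, p = take i q) (p \in path_closure Hs).
Proof.
rewrite mem_undup; apply: (iffP flatten_mapP) => [[q qH /prefixesP]|[q qH /prefixesP]].
  by exists q.
by exists q.
Qed.

Lemma prefix_closed_path_closure Hs : prefix_closed (path_closure Hs).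
Proof.
move=> p k /path_closureP[q qH [i ->]]; apply/path_closureP.
by exists q => //; exists (minn k i); rewrite take_min.
Qed.

Lemma size_level_path_closure Hs i :
  (size [seq p <- path_closure Hs | size p == i] <= size Hs)%N.
Proof.
rewrite -[X in (_ <= X)%N](size_map (take i)).
apply: uniq_leq_size; first by rewrite filter_uniq ?undup_uniq.
move=> p; rewrite mem_filter => /andP[/eqP szp /path_closureP[q qH [k pE]]].
by apply/mapP; exists q; rewrite // -szp pE size_take_min take_min take_size.
Qed.

Lemma young_powR (R : realType) (a x y : R) : 0 < a < 1 -> 0 <= x -> 0 < y ->
  x `^ a * y `^ (1 - a) <= a * x + (1 - a) * y.
Proof.
move=> /andP[a_gt0 a_lt1] x_ge0 y_gt0.
have a'_gt0 : 0 < 1 - a by rewrite subr_gt0.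
have := @conjugate_powR R (x `^ a) (y `^ (1 - a)) a^-1 (1 - a)^-1
  (powR_ge0 _ _) (powR_ge0 _ _).
rewrite !invr_gt0 a_gt0 a'_gt0 !invrK addrC subrK => /(_ isT isT erefl).
rewrite -!powRrM !mulfV ?gt_eqF // !powRr1 ?(ltW y_gt0) //.
by rewrite [a * x]mulrC [(1 - a) * y]mulrC.
Qed.

Lemma sum_powR_le (R : realType) (a : R) (T : eqType) (s : seq T) (f : T -> R) :
  0 < a < 1 -> (forall x, 0 <= f x) ->
  \sum_(x <- s) f x `^ a <= (size s)%:R `^ (1 - a) * (\sum_(x <- s) f x) `^ a.
Proof.
move=> a01 f_ge0; have /andP[a_gt0 _] := a01.
set S := \sum_(x <- s) f x.
have [S0|S_neq0] := eqVneq S 0.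
  rewrite S0 powR0 ?gt_eqF // mulr0 big_seq big1 // => x xs.
  suff -> : f x = 0 by rewrite powR0 ?gt_eqF.
  apply/eqP; rewrite eq_le f_ge0 andbT -S0 /S (big_rem x) //= lerDl.
  exact: sumr_ge0.
have S_gt0 : 0 < S by rewrite lt_def S_neq0 sumr_ge0.
have size_gt0 : 0 < (size s)%:R :> R.
  by case: s @S S_neq0 {S_gt0} => [|//]; rewrite /= big_nil eqxx.
(* Young's inequality at the mean y = S / |s|, summed over s *)
set y := S / (size s)%:R.
have y_gt0 : 0 < y by rewrite divr_gt0.
rewrite -(ler_pM2r (powR_gt0 (1 - a) y_gt0)).
have -> : (size s)%:R `^ (1 - a) * S `^ a * y `^ (1 - a) = S.
  rewrite mulrAC -powRM ?(ltW size_gt0) ?(ltW y_gt0) // [_ * y]mulrC /y divfK ?gt_eqF //.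
  by rewrite -powRD ?S_neq0 ?implybT // subrK powRr1 ?(ltW S_gt0).
rewrite mulr_suml; apply: le_trans (ler_sum _ (fun x _ => young_powR a01 (f_ge0 x) y_gt0)) _.
rewrite big_split /= -!mulr_sumr big_const_seq count_predT iter_addr addr0 -/S.
by rewrite -[_^-1 *+ _]mulr_natr mulVf ?gt_eqF // mulr1 -mulrDl addrC subrK mul1r.
Qed.

Lemma subtree_nil V (t : stree V) : subtree t [::] = Some t.
Proof. by case: t. Qed.

Lemma bnd_from_nil V (t : stree V) bd : bnd_from t bd [::] = bd.
Proof. by case: t. Qed.

Lemma size_node V (t : stree V) q : is_node t q -> (size q <= height t)%N.
Proof.
elim: q t => [|j q IH] [F|F Sp t1 t2] //= /IH; case: j => /leq_trans; apply.
  exact: leq_maxr.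
exact: leq_maxl.
Qed.

Lemma card_child_boundaries V (bd S : {set V}) (F1 F2 : {set {set V}}) :
  verts F1 :&: verts F2 = S ->
  (#|(bd :|: S) :&: verts F1| + #|(bd :|: S) :&: verts F2| <= #|bd| + 2 * #|S|)%N.
Proof.
move=> vertsS; rewrite -cardsUI.
have cardU : (#|((bd :|: S) :&: verts F1) :|: ((bd :|: S) :&: verts F2)| <= #|bd :|: S|)%N.
  by apply: subset_leq_card; rewrite -setIUr subsetIl.
have cardI : (#|((bd :|: S) :&: verts F1) :&: ((bd :|: S) :&: verts F2)| <= #|S|)%N.
  apply: subset_leq_card; rewrite -vertsS; apply/subsetP => x.
  by rewrite !inE => /andP[/andP[_ ->] /andP[_ ->]].
have : (#|bd :|: S| <= #|bd| + #|S|)%N by rewrite cardsU leq_subr.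
lia.
Qed.

Section SeparatorTree.
Variables (R : realType) (alpha c b : R) (L : nat) (V : finType).
Local Notation wf := (wf_tree alpha c b L).

Definition region_size (t : stree V) (p : seq bool) : nat :=
  if subtree t p is Some t' then #|region t'| else 0.

Lemma wf_subtree p (t t' : stree V) : wf t -> subtree t p = Some t' -> wf t'.
Proof.
elim: p t => [|j p IH] t wf_t; first by rewrite subtree_nil => -[<-].
case: t wf_t => [F|F Sp t1 t2] //= [_ [_ _ wf1 wf2]].
by case: j; apply: IH.
Qed.

Lemma level_region_size i (t : stree V) P : wf t -> uniq P ->
  (level_sum (region_size t) P i <= #|region t|)%N.
Proof.
elim: i t P => [|i IH] t P wf_t uP.
  by apply: leq_trans (level_sum0 _ uP) _; rewrite /region_size subtree_nil.
rewrite level_sumS; case: t wf_t => [F|F Sp t1 t2] /=.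
  by rewrite /level_sum !big1.
move=> [[_ disj <- _ _] [_ _ wf1 wf2]].
rewrite cardsU disj cards0 subn0.
by apply: leq_add; apply: IH; rewrite // uniq_child_paths.
Qed.

Lemma level_bnd_from i (t : stree V) bd P : wf t -> uniq P -> prefix_closed P ->
  (level_sum (fun p => #|bnd_from t bd p|) P i
   <= #|bd| + 2 * \sum_(0 <= j < i) level_sum (fun p => #|sep_at t p|) P j)%N.
Proof.
elim: i t bd P => [|i IH] t bd P wf_t uP closedP.
  by apply: leq_trans (level_sum0 _ uP) _; rewrite /= bnd_from_nil leq_addr.
have [->|/(prefix_closed_nil closedP) nilP] := eqVneq P [::].
  by rewrite /level_sum big_nil.
case: t wf_t => [F|F Sp t1 t2] /=.
  move=> _; rewrite level_sumS.
  suff leaf0 j : level_sum (fun q => #|bnd_from (SLeaf F) bd (j :: q)|) (child_paths j P) i = 0%N.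
    by rewrite !leaf0.
  by rewrite /level_sum big1 // => q; rewrite /= cards0.
move=> [[_ _ _ vertsS _] [_ _ wf1 wf2]].
set t := SNode F Sp t1 t2.
set bd1 := (bd :|: Sp) :&: verts (region t1).
set bd2 := (bd :|: Sp) :&: verts (region t2).
have bnd_split : level_sum (fun p => #|bnd_from t bd p|) P i.+1 =
    (level_sum (fun q => #|bnd_from t1 bd1 q|) (child_paths false P) i
     + level_sum (fun q => #|bnd_from t2 bd2 q|) (child_paths true P) i)%N.
  exact: level_sumS.
have sep_split j : level_sum (fun p => #|sep_at t p|) P j.+1 =
    (level_sum (fun q => #|sep_at t1 q|) (child_paths false P) j
     + level_sum (fun q => #|sep_at t2 q|) (child_paths true P) j)%N.
  exact: level_sumS.
have card_Sp : (#|Sp| <= level_sum (fun p => #|sep_at t p|) P 0)%N.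
  by rewrite /level_sum (big_rem [::]) //= /sep_at subtree_nil leq_addr.
have IH1 := IH t1 bd1 _ wf1 (uniq_child_paths false uP) (prefix_closed_child_paths closedP).
have IH2 := IH t2 bd2 _ wf2 (uniq_child_paths true uP) (prefix_closed_child_paths closedP).
have := card_child_boundaries bd vertsS; rewrite -/bd1 -/bd2 => card_bd12.
rewrite bnd_split big_nat_recl //; under eq_bigr do rewrite sep_split.
rewrite big_split /=; lia.
Qed.

Hypotheses (alpha01 : 0 < alpha < 1) (c_ge0 : 0 <= c).

Lemma sepbound_le n : (1 <= n)%N -> sepbound alpha c n <= 2 * c * n%:R `^ alpha.
Proof.
move=> n_ge1; have /andP[alpha_gt0 _] := alpha01; rewrite /sepbound.
set x := _ `^ alpha.
have x_ge1 : 1 <= x.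
  have n_ge1R : 1 <= n%:R :> R by rewrite ler1n.
  by have := ler_powR n_ge1R (ltW alpha_gt0); rewrite powRr0.
have := ceil_itv x => /andP[ceil_lb _]; rewrite intrB in ceil_lb.
have : (Num.ceil x)%:~R <= x + 1 :> R by lra.
move/(ler_wpM2l c_ge0); nra.
Qed.

Lemma card_sep_at_le (t : stree V) p : wf t ->
  (#|sep_at t p|%:R : R) <= 2 * c * (region_size t p)%:R `^ alpha.
Proof.
move=> wf_t; rewrite /sep_at /region_size.
case E: (subtree t p) => [[F|F Sp t1 t2]|]; rewrite ?cards0 ?mulr_ge0 ?powR_ge0 //.
have [[F_ge2 _ _ _ card_Sp] _] := wf_subtree wf_t E.
exact: le_trans card_Sp (sepbound_le (ltnW F_ge2)).
Qed.

Lemma level_sep_path_closure (T : stree V) Hs i : wf T ->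
  (level_sum (fun p => #|sep_at T p|) (path_closure Hs) i)%:R
    <= 2 * c * ((size Hs)%:R `^ (1 - alpha) * #|region T|%:R `^ alpha).
Proof.
move=> wfT; have /andP[alpha_gt0 alpha_lt1] := alpha01.
rewrite /level_sum -big_filter natr_sum.
apply: le_trans (ler_sum _ (fun p _ => card_sep_at_le p wfT)) _.
rewrite -mulr_sumr ler_wpM2l ?mulr_ge0 //.
apply: le_trans (sum_powR_le _ alpha01 (fun p => ler0n _ (region_size T p))) _.
apply: ler_pM; rewrite ?powR_ge0 //.
  apply: ge0_ler_powR; rewrite ?nnegrE ?subr_ge0 ?(ltW alpha_lt1) ?ler_nat //.
  exact: size_level_path_closure.
apply: ge0_ler_powR; rewrite ?nnegrE ?sumr_ge0 ?(ltW alpha_gt0) //.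
by rewrite -natr_sum ler_nat big_filter level_region_size ?undup_uniq.
Qed.

Lemma path_closure_sum_le (T : stree V) Hs : wf T -> all (is_node T) Hs ->
  ((\sum_(p <- path_closure Hs) (#|bnd T p| + #|sep_at T p|))%N%:R : R)
    <= 3 * (height T).+1%:R ^+ 2
         * (2 * c * ((size Hs)%:R `^ (1 - alpha) * #|region T|%:R `^ alpha)).
Proof.
move=> wfT nodesHs.
set P := path_closure Hs; set N := (height T).+1; set B := 2 * c * _.
have uP : uniq P by exact: undup_uniq.
have B_ge0 : 0 <= B by rewrite !mulr_ge0 ?powR_ge0.
have size_lt p : p \in P -> (size p < N)%N.
  move=> /path_closureP[q /(allP nodesHs)/size_node qH [i ->]].
  by rewrite ltnS size_take_min geq_min qH orbT.
have sepB i : (level_sum (fun p => #|sep_at T p|) P i)%:R <= B.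
  exact: level_sep_path_closure.
have bndB i : (i <= N)%N -> (level_sum (fun p => #|bnd T p|) P i)%:R <= 2 * N%:R * B.
  move=> le_iN.
  have := level_bnd_from i set0 wfT uP (@prefix_closed_path_closure Hs).
  rewrite cards0 add0n -(ler_nat R) => /le_trans; apply.
  rewrite natrM natr_sum -mulrA ler_wpM2l //.
  apply: le_trans (ler_sum _ (fun j _ => sepB j)) _.
  by rewrite sumr_const_nat subn0 -[B *+ _]mulr_natl ler_wpM2r ?ler_nat.
rewrite (sum_by_level _ size_lt) natr_sum; under eq_bigr do rewrite level_sumD natrD.
apply: (@le_trans _ _ (\sum_(i < N) (2 * N%:R * B + B))).
  by apply: ler_sum => i _; apply: lerD; [apply: bndB; exact: ltnW|].
rewrite sumr_const card_ord -[_ *+ N]mulr_natr.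
rewrite -subr_ge0 (_ : _ - _ = N%:R * (N%:R - 1) * B); last by ring.
by rewrite mulr_ge0 // mulr_ge0 // subr_ge0 ler1n.
Qed.

End SeparatorTree.

Theorem mainTheorem6 (R : realType) (alpha c b Ceta : R) (L : nat) :
  0 < alpha < 1 -> 0 < c -> 0 < b < 1 -> 0 < Ceta ->
  exists (C : R) (k : nat), 0 < C /\
  forall (V : finType) (G : {set {set V}}) (T : stree V) (Hs : seq (seq bool)),
    simple_graph G ->
    separable alpha c b G ->
    sep_tree alpha c b L G T ->
    (height T)%:R <= Ceta * ln ((#|G|.+2)%:R : R) ->
    uniq Hs -> all (is_node T) Hs ->
    ((\sum_(p <- path_closure Hs) (#|bnd T p| + #|sep_at T p|))%N%:R : R)
      <= C * ((size Hs)%:R `^ (1 - alpha)) * ((#|G|%:R : R) `^ alpha)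
           * (ln ((#|G|.+2)%:R : R)) ^+ k.
Proof.
move=> alpha01 c_gt0 _ Ceta_gt0.
have ln2_gt0 : 0 < ln (2 : R) by rewrite ln_gt0 // ltr1n.
set D := Ceta + (ln (2 : R))^-1.
have D_gt0 : 0 < D by rewrite addr_gt0 ?invr_gt0.
exists (6 * c * D ^+ 2), 2%N; split; first by rewrite !mulr_gt0 // exprn_gt0.
move=> V G T Hs _ _ [<- wfT] heightT _ nodesHs.
set l := ln _ in heightT *.
have ln2_le : ln 2 <= l by rewrite ler_ln ?posrE ?ltr0n // ler_nat.
have N_le : (height T).+1%:R <= D * l.
  by rewrite -addn1 natrD mulrDl lerD // ler_pdivlMl // mulr1.
apply: le_trans (path_closure_sum_le alpha01 (ltW c_gt0) wfT nodesHs) _.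
set X := _ * _ `^ alpha.
have X_ge0 : 0 <= X by rewrite mulr_ge0 ?powR_ge0.
rewrite (_ : _ * _ * _ * _ = 6 * c * X * (D * l) ^+ 2); last by rewrite /X; ring.
rewrite (_ : 3 * _ * _ = 6 * c * X * (height T).+1%:R ^+ 2); last by ring.
apply: ler_wpM2l; first by rewrite mulr_ge0 // mulr_ge0 // ltW.
have N_ge0 : 0 <= (height T).+1%:R :> R by [].
nra.
Qed.
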